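(* Let $n\ge 7$ and let $G$ be one of the following graphs: $K_1\vee \frac{n-1}{4}K_4$ with $n\equiv 1\pmod 4$; $K_1\vee (K_1\cup \frac{n-2}{4}K_4)$ with $n\equiv 2\pmod 4$; $K_1\vee (K_{1,1}\cup \frac{n-3}{4}K_4)$ with $n\equiv 3\pmod 4$; or $K_1\vee (K_{1,s}^+\cup \frac{n-s-2}{4}K_4)$ with $2\le s\le n-6$. Then $q(G)<q(K_{1,1,n-2}^+)$.
   Context: $q(G)$ denotes the largest eigenvalue of the signless Laplacian matrix $Q(G)=D(G)+A(G)$ ($A(G)$ adjacency matrix, $D(G)$ diagonal degree matrix). $K_m$ is the complete graph on $m$ vertices, $kH$ is the disjoint union of $k$ copies of $H$, $\cup$ is disjoint union, and $G\vee H$ is the join (disjoint union plus all edges between $V(G)$ and $V(H)$). $K_{1,s}$ is the star with $s$ leaves; for $s\ge2$, $K_{1,s}^+$ is obtained from $K_{1,s}$ by adding one edge between two leaves. $K_{1,1,n-2}^+$ is obtained from the complete tripartite graph $K_{1,1,n-2}$ by adding one edge inside the part of size $n-2$. In the last family it is implicit that $\frac{n-s-2}{4}$ is an integer. *)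

From HB Require Import structures.
From mathcomp Require Import all_boot all_order all_algebra.
From mathcomp Require Import reals.
Set Implicit Arguments. Unset Strict Implicit. Unset Printing Implicit Defensive.
Import Order.TTheory GRing.Theory Num.Theory.

(* A finite simple graph: finite vertex type and an adjacency relation.
   All the constructions below produce symmetric irreflexive relations. *)
Record graph := Graph { gV : finType; gE : rel gV }.

Definition gunion (G H : graph) : graph :=
  @Graph (gV G + gV H)%type (fun x y => match x, y with
    | inl a, inl b => gE a b
    | inr a, inr b => gE a b
    | _, _ => false end).

Definition gjoin (G H : graph) : graph :=
  @Graph (gV G + gV H)%type (fun x y => match x, y with
    | inl a, inl b => gE a b
    | inr a, inr b => gE a b
    | _, _ => true end).

Definition gnull : graph := @Graph void (fun _ _ => false).

Definition Kc (m : nat) : graph := @Graph 'I_m (fun i j => i != j).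

Definition copies (k : nat) (H : graph) : graph := iter k (gunion H) gnull.

Definition star (s : nat) : graph :=
  @Graph 'I_s.+1 (fun i j => (i != j) && (((i : nat) == 0) || ((j : nat) == 0))).

(* K_{1,s}^+ : star plus the edge between leaves 1 and 2 (s >= 2) *)
Definition starplus (s : nat) : graph :=
  @Graph 'I_s.+1 (fun i j => ((i != j) && (((i : nat) == 0) || ((j : nat) == 0)))
     || (((i : nat) == 1) && ((j : nat) == 2)) || (((i : nat) == 2) && ((j : nat) == 1))).

(* K_{1,1,n-2}^+ on vertices 0..n-1: parts {0}, {1}, {2,...,n-1},
   plus the edge {2,3} inside the large part *)
Definition K11plus (n : nat) : graph :=
  @Graph 'I_n (fun i j => (i != j) &&
     [|| (i : nat) < 2, (j : nat) < 2,
         ((i : nat) == 2) && ((j : nat) == 3) | ((i : nat) == 3) && ((j : nat) == 2)]).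

Definition deg (G : graph) (v : gV G) : nat := #|[pred u | gE v u]|.

Definition sQ (R : realType) (G : graph) : 'M[R]_#|gV G| :=
  \matrix_(i, j) (((i == j)%:R * (deg (enum_val i))%:R)%R
                  + (gE (enum_val i) (enum_val j))%:R)%R.

Definition is_q (R : realType) (G : graph) (a : R) : Prop :=
  eigenvalue (sQ R G) a /\ (forall b, eigenvalue (sQ R G) b -> (b <= a)%R).

Inductive lem_family (n : nat) : graph -> Prop :=
| fam1 : n %% 4 = 1 -> lem_family n (gjoin (Kc 1) (copies ((n - 1) %/ 4) (Kc 4)))
| fam2 : n %% 4 = 2 ->
    lem_family n (gjoin (Kc 1) (gunion (Kc 1) (copies ((n - 2) %/ 4) (Kc 4))))
| fam3 : n %% 4 = 3 ->
    lem_family n (gjoin (Kc 1) (gunion (star 1) (copies ((n - 3) %/ 4) (Kc 4))))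
| fam4 (s : nat) : 2 <= s -> s <= n - 6 -> (n - s - 2) %% 4 = 0 ->
    lem_family n (gjoin (Kc 1) (gunion (starplus s) (copies ((n - s - 2) %/ 4) (Kc 4)))).

From HB Require Import structures.
From mathcomp Require Import all_boot all_order all_algebra.
From mathcomp Require Import reals.
From Stdlib Require Import Classical.
From mathcomp Require Import ring lra zify.
Import Order.TTheory GRing.Theory Num.Theory.
Set Implicit Arguments. Unset Strict Implicit. Unset Printing Implicit Defensive.
Local Open Scope ring_scope.

(* Every G of the statement is a cone K_1 ∨ H over a disjoint union H of
   copies of K_4 with one small graph.  Q(G) is a nonnegative matrix, so a
   positive vector y with Q y <= c y entrywise bounds all its eigenvalues by c
   (Collatz-Wielandt).  Taking y = 1 at the apex and constant on each vertex
   class of H, with the values solving the row equations of those classes,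
   all row inequalities hold for c = n + 43/25.  On the other side,
   K_{1,1,n-2}^+ has an eigenvector that is constant on the classes {0,1},
   {2,3} and the rest; its eigenvalue is a root of a cubic which changes sign
   on [n + 43/25, n + 3].  Finally, the largest eigenvalues exist because there
   are finitely many eigenvalues, and Q(G) has at least one: the vector
   (1,-1,0,0) on a copy of K_4 gives the eigenvalue 3. *)

Lemma poly_max_root (R : realDomainType) (p : {poly R}) a :
  p != 0 -> root p a -> exists2 m, root p m & forall b, root p b -> b <= m.
Proof.
move: {2}(size p) (leqnn (size p)) => n; elim: n p a => [|n IH] p a.
  by rewrite size_poly_leq0 => /eqP ->; rewrite eqxx.
move=> sz_p p0 pa; have /factor_theorem [q pE] := pa.
have q0 : q != 0 by apply: contraNneq p0 => q0; rewrite pE q0 mul0r.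
have root_pE b : root p b = (b == a) || root q b.
  by rewrite pE rootM root_XsubC orbC.
have [[b qb ab] | no_larger] := classic (exists2 b, root q b & a < b).
  have sz_q : (size q <= n)%N.
    by move: sz_p; rewrite pE size_mul ?polyXsubC_eq0 // size_XsubC addn2.
  have [m qm m_max] := IH q b sz_q q0 qb.
  exists m; first by rewrite root_pE qm orbT.
  move=> c; rewrite root_pE => /orP [/eqP -> | /m_max //].
  exact/ltW/(lt_le_trans ab)/m_max.
exists a => // b; rewrite root_pE => /orP [/eqP -> // | qb].
by rewrite leNgt; apply/negP => ab; apply: no_larger; exists b.
Qed.

Lemma eigenvalue_max (R : realFieldType) m (A : 'M[R]_m) a :
  eigenvalue A a -> exists2 b, eigenvalue A b & forall c, eigenvalue A c -> c <= b.
Proof.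
rewrite eigenvalue_root_char => /(poly_max_root (monic_neq0 (char_poly_monic A))).
by case=> b Ab b_max; exists b => [|c]; rewrite eigenvalue_root_char // => /b_max.
Qed.

Lemma eigenvalue_le_of_subeigenvector (R : realFieldType) m (A : 'M[R]_m)
    (y : 'rV[R]_m) c b :
  (forall i j, 0 <= A i j) -> (forall j, 0 < y 0 j) ->
  (forall j, (y *m A) 0 j <= c * y 0 j) -> eigenvalue A b -> b <= c.
Proof.
move=> A_ge0 y_gt0 yA_le /eigenvalueP [v vA v_neq0].
have [j1 vj1] : exists j1, v 0 j1 != 0.
  apply/not_all_not_ex => v0; apply/negP: v_neq0; apply/negPn/eqP/rowP => j.
  by rewrite mxE; apply/eqP/negPn/negP/v0.
pose ratio j : R := `|v 0 j| / y 0 j.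
have [j0 _ ratio_max] := @arg_maxP _ _ _ j1 xpredT ratio isT.
set r := ratio j0 in ratio_max.
have v_le j : `|v 0 j| <= r * y 0 j by rewrite -ler_pdivrMr //; exact: ratio_max.
have r_gt0 : 0 < r.
  by apply: lt_le_trans (ratio_max j1 isT); rewrite divr_gt0 ?normr_gt0.
have vj0_gt0 : 0 < `|v 0 j0|.
  by move: r_gt0; rewrite /r /ratio pmulr_lgt0 // invr_gt0.
suff : `|b| * `|v 0 j0| <= c * `|v 0 j0|.
  by rewrite ler_pM2r // => /(le_trans (ler_norm b)).
rewrite -normrM; have /rowP /(_ j0) := vA; rewrite !mxE => <-.
apply: le_trans (ler_norm_sum _ _ _) _.
apply: (@le_trans _ _ (r * (y *m A) 0 j0)).
  rewrite mxE mulr_sumr; apply: ler_sum => i _.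
  by rewrite normrM (ger0_norm (A_ge0 _ _)) mulrA; apply: ler_wpM2r.
apply: (@le_trans _ _ (r * (c * y 0 j0))); first by rewrite ler_pM2l.
by rewrite mulrCA /r /ratio divfK ?gt_eqF.
Qed.

Lemma gjoin_sym (G H : graph) :
  symmetric (@gE G) -> symmetric (@gE H) -> symmetric (@gE (gjoin G H)).
Proof. by move=> symG symH [a|a] [b|b] /=. Qed.

Lemma gunion_sym (G H : graph) :
  symmetric (@gE G) -> symmetric (@gE H) -> symmetric (@gE (gunion G H)).
Proof. by move=> symG symH [a|a] [b|b] /=. Qed.

Lemma Kc_sym m : symmetric (@gE (Kc m)).
Proof. by move=> a b /=; rewrite eq_sym. Qed.

Lemma copies_sym k (H : graph) : symmetric (@gE H) -> symmetric (@gE (copies k H)).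
Proof. by move=> symH; elim: k => [[]|k IH]; apply: gunion_sym. Qed.

Lemma copies_K4_sym k : symmetric (@gE (copies k (Kc 4))).
Proof. exact/copies_sym/Kc_sym. Qed.

Lemma star_sym s : symmetric (@gE (star s)).
Proof. by move=> a b /=; rewrite eq_sym orbC. Qed.

Lemma starplus_sym s : symmetric (@gE (starplus s)).
Proof.
move=> a b /=; rewrite eq_sym [((a : nat) == 0) || _]orbC.
by case: ((a : nat) == 1); case: ((b : nat) == 2); case: ((a : nat) == 2);
  case: ((b : nat) == 1); rewrite ?orbT ?orbF.
Qed.

Lemma K11plus_sym n : symmetric (@gE (K11plus n)).
Proof.
move=> a b /=; rewrite eq_sym; case: (b != a) => //=.
by case: ((a : nat) < 2)%N; case: ((b : nat) < 2)%N; case: ((a : nat) == 2);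
  case: ((b : nat) == 3); case: ((a : nat) == 3); case: ((b : nat) == 2).
Qed.

Lemma deg_sum (G : graph) (v : gV G) : deg v = (\sum_w gE v w)%N.
Proof.
by rewrite /deg -sum1_card big_mkcond; apply: eq_bigr => w _; rewrite inE; case: gE.
Qed.

Lemma deg_gunionl (G H : graph) (a : gV G) : deg (inl a : gV (gunion G H)) = deg a.
Proof. by rewrite !deg_sum big_sumType /= big1_eq addn0. Qed.

Lemma deg_gunionr (G H : graph) (b : gV H) : deg (inr b : gV (gunion G H)) = deg b.
Proof. by rewrite !deg_sum big_sumType /= big1_eq. Qed.

Lemma deg_Kc m (a : 'I_m) : deg (a : gV (Kc m)) = m.-1.
Proof.
rewrite /deg -[m in RHS]card_ord -(cardC1 a); apply: eq_card => b.
by rewrite !inE eq_sym.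
Qed.

Lemma deg_copies k (H : graph) d :
  (forall v : gV H, deg v = d) -> forall v : gV (copies k H), deg v = d.
Proof.
by move=> degH; elim: k => [[]|k IH] [a|b]; rewrite ?deg_gunionl ?deg_gunionr.
Qed.

Lemma deg_star1 (a : 'I_2) : deg (a : gV (star 1)) = 1%N.
Proof. by rewrite deg_sum !big_ord_recr big_ord0; case: a => [[|[|]]]. Qed.

Lemma card_copies k (H : graph) : #|gV (copies k H)| = (k * #|gV H|)%N.
Proof. by elim: k => [|k IH]; rewrite ?card_void //= card_sum IH mulSn. Qed.

Lemma big_nat_const_in (V : nmodType) (F : nat -> V) m n x :
  (forall j, (m <= j < n)%N -> F j = x) -> \sum_(m <= j < n) F j = x *+ (n - m).
Proof. by move=> Fx; rewrite (eq_big_nat _ _ Fx) sumr_const_nat. Qed.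

Lemma linear_eq_pos_sol (R : realFieldType) (c d e : R) :
  d < c -> 0 < e -> exists2 x, 0 < x & (c - d) * x = e.
Proof.
move=> dc e_gt0; exists (e / (c - d)); last by rewrite mulrC divfK // subr_eq0 gt_eqF.
by rewrite divr_gt0 // subr_gt0.
Qed.

Section ApexBounds.
Variable R : realFieldType.
Implicit Types N S t p a b : R.

Lemma family1_apex_le N t :
  9 <= N -> (N + 43/25 - 7) * t = 1 -> (N - 1) * (1 + t) <= N + 43/25.
Proof. by move=> N_ge9 ht; nra. Qed.

Lemma family2_apex_le N t p :
  10 <= N -> (N + 43/25 - 7) * t = 1 -> (N + 43/25 - 1) * p = 1 ->
  (1 + p) + (N - 2) * (1 + t) <= N + 43/25.
Proof.
move=> N_ge10 ht hp.
have t_le : t <= 25/118 by nra.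
have p_le : p <= 25/268 by nra.
lra.
Qed.

Lemma family3_apex_le N t p :
  7 <= N -> (N + 43/25 - 7) * t = 1 -> (N + 43/25 - 3) * p = 1 ->
  2 * (1 + p) + (N - 3) * (1 + t) <= N + 43/25.
Proof.
move=> N_ge7 ht hp.
have t_le : t <= 25/43 by nra.
have p_le : p <= 25/143 by nra.
lra.
Qed.

Lemma family4_apex_le N S t a b :
  2 <= S -> S <= N - 6 -> (N + 43/25 - 7) * t = 1 ->
  (N + 43/25 - 4) * a = 3/2 -> (N + 43/25 - 2) * b = 3/2 ->
  3/2 + 2 * (1 + a) + (S - 2) * (1 + b) + (N - S - 2) * (1 + t) <= N + 43/25.
Proof.
move=> S_ge2 S_le ht ha hb.
have t_gt0 : 0 < t by nra.
have b_gt0 : 0 < b by nra.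
have t_le : t <= 25/68 by nra.
have a_le : a <= 75/286 by nra.
(* linear in [S]: it suffices to check [S = 2] and [S = N - 6] *)
have [b_le_t | t_lt_b] := lerP b t.
  have : (S - 2) * (b - t) <= 0 by nra.
  lra.
have : (N - 6 - S) * (t - b) <= 0 by nra.
lra.
Qed.

Lemma family4_centre_le N S a b :
  2 <= S -> S <= N - 6 -> (N + 43/25 - 4) * a = 3/2 -> (N + 43/25 - 2) * b = 3/2 ->
  3/2 + ((1/2 + a) * 2 + (1/2 + b) * (S - 2)) <= (N + 43/25) / 2.
Proof.
move=> S_ge2 S_le ha hb.
have b_gt0 : 0 < b by nra.
have a_le : a <= 75/286 by nra.
have : (N - 6 - S) * b >= 0 by nra.
nra.
Qed.

End ApexBounds.

Section SignlessLaplacian.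
Variable R : realType.

(* [(D + A) x] at [v], as [(D x)_v = \sum_w A_vw x_v]. *)
Definition Qmul (G : graph) (x : gV G -> R) (v : gV G) : R :=
  \sum_w (gE v w)%:R * (x v + x w).

Definition vec_of (G : graph) (x : gV G -> R) : 'rV[R]_#|gV G| :=
  \row_i x (enum_val i).

Lemma vec_of_mul_sQ (G : graph) (x : gV G -> R) :
  symmetric (@gE G) -> vec_of x *m sQ R G = vec_of (Qmul x).
Proof.
move=> symG; apply/rowP => j; rewrite !mxE.
under eq_bigr => i _ do rewrite !mxE mulrDr.
rewrite big_split /= (bigD1 j) //= big1 => [|i /negPf ->]; last by rewrite mul0r mulr0.
rewrite eqxx mul1r addr0 /Qmul.
under [RHS]eq_bigr => w _ do rewrite mulrDr.
rewrite big_split /= -big_distrl /= deg_sum natr_sum mulrC; congr (_ + _).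
rewrite (big_enum_val (A := gV G)) /=.
by apply: eq_bigr => i _; rewrite symG mulrC.
Qed.

Lemma sQ_eigenvalue (G : graph) (x : gV G -> R) l v0 :
  symmetric (@gE G) -> x v0 != 0 -> (forall v, Qmul x v = l * x v) ->
  eigenvalue (sQ R G) l.
Proof.
move=> symG xv0 Qx; apply/eigenvalueP; exists (vec_of x).
  by rewrite vec_of_mul_sQ //; apply/rowP => j; rewrite !mxE Qx.
by apply/eqP => /rowP /(_ (enum_rank v0)); rewrite !mxE enum_rankK => /eqP; apply/negP.
Qed.

Lemma sQ_eigenvalue_le (G : graph) (y : gV G -> R) c b :
  symmetric (@gE G) -> (forall v, 0 < y v) -> (forall v, Qmul y v <= c * y v) ->
  eigenvalue (sQ R G) b -> b <= c.
Proof.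
move=> symG y_gt0 Qy_le; apply: (eigenvalue_le_of_subeigenvector (y := vec_of y)).
- by move=> i j; rewrite mxE addr_ge0 ?mulr_ge0.
- by move=> j; rewrite mxE.
- by move=> j; rewrite vec_of_mul_sQ // !mxE.
Qed.

Definition sum_fun (A B : Type) (f : A -> R) (g : B -> R) (v : A + B) : R :=
  match v with inl a => f a | inr b => g b end.

Lemma Qmul_gjoinl (G H : graph) (f : gV G -> R) (g : gV H -> R) a :
  Qmul (G := gjoin G H) (sum_fun f g) (inl a) = Qmul f a + \sum_b (f a + g b).
Proof. by rewrite /Qmul big_sumType /=; under [X in _ + X]eq_bigr do rewrite mul1r. Qed.

Lemma Qmul_gjoinr (G H : graph) (f : gV G -> R) (g : gV H -> R) b :
  Qmul (G := gjoin G H) (sum_fun f g) (inr b) = \sum_a (g b + f a) + Qmul g b.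
Proof. by rewrite /Qmul big_sumType /=; under [X in X + _]eq_bigr do rewrite mul1r. Qed.

Lemma Qmul_gunionl (G H : graph) (f : gV G -> R) (g : gV H -> R) a :
  Qmul (G := gunion G H) (sum_fun f g) (inl a) = Qmul f a.
Proof. by rewrite /Qmul big_sumType /= [X in _ + X]big1 ?addr0 // => b; rewrite mul0r. Qed.

Lemma Qmul_gunionr (G H : graph) (f : gV G -> R) (g : gV H -> R) b :
  Qmul (G := gunion G H) (sum_fun f g) (inr b) = Qmul g b.
Proof. by rewrite /Qmul big_sumType /= [X in X + _]big1 ?add0r // => a; rewrite mul0r. Qed.

Lemma Qmul_const (G : graph) (t : R) (v : gV G) :
  Qmul (fun _ => t) v = (deg v)%:R * (t + t).
Proof. by rewrite /Qmul -big_distrl deg_sum natr_sum. Qed.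

Lemma Qmul_K1 (f : 'I_1 -> R) a : Qmul (G := Kc 1) f a = 0.
Proof. by rewrite /Qmul big1 // => b _; rewrite (ord1 a) (ord1 b) mul0r. Qed.

(* [z] extends by the value [1] at the apex to a positive vector [y] with
   [(Q y)_h <= c y_h] at every vertex [h] of [H]. *)
Definition cone_test (H : graph) (c : R) (z : gV H -> R) :=
  (forall h, 0 < z h) /\ (forall h, 1 + z h + Qmul z h <= c * z h).

Lemma cone_eigenvalue_le (H : graph) (z : gV H -> R) c b :
  symmetric (@gE H) -> cone_test c z -> \sum_h (1 + z h) <= c ->
  eigenvalue (sQ R (gjoin (Kc 1) H)) b -> b <= c.
Proof.
move=> symH [z_gt0 z_test] apex_le.
apply: (@sQ_eigenvalue_le (gjoin (Kc 1) H) (sum_fun (fun _ => 1) z))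
  => [|[a|h]|[a|h]] //=.
- exact: gjoin_sym (@Kc_sym 1) symH.
- by rewrite Qmul_gjoinl Qmul_K1 add0r mulr1.
- by rewrite Qmul_gjoinr big_ord1 (addrC (z h)).
Qed.

Lemma cone_test_gunion (S T : graph) (f : gV S -> R) (g : gV T -> R) c :
  cone_test c f -> cone_test c g -> cone_test (H := gunion S T) c (sum_fun f g).
Proof.
move=> [f_gt0 f_test] [g_gt0 g_test]; split=> [[a|b]|[a|b]] //=.
- by rewrite Qmul_gunionl.
- by rewrite Qmul_gunionr.
Qed.

Lemma cone_test_regular (H : graph) d (t c : R) :
  (forall h : gV H, deg h = d) -> 0 < t -> 1 + (1 + 2 * d%:R) * t <= c * t ->
  cone_test (H := H) c (fun _ => t).
Proof. by move=> degH t_gt0 t_test; split=> // h; rewrite Qmul_const degH; lra. Qed.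

Definition zero_sum_eigenfun (G : graph) (l : R) (z : gV G -> R) :=
  [/\ exists v, z v != 0, \sum_v z v = 0 & forall v, Qmul z v = l * z v].

Lemma zero_sum_eigenfun_gunionl (S T : graph) l (z : gV S -> R) :
  zero_sum_eigenfun l z ->
  zero_sum_eigenfun (G := gunion S T) l (sum_fun z (fun _ => 0)).
Proof.
case=> [[v zv] z_sum Qz]; split=> [|| [a|b]].
- by exists (inl v).
- by rewrite big_sumType /= big1_eq addr0.
- by rewrite Qmul_gunionl.
- by rewrite Qmul_gunionr Qmul_const mulr0 addr0 mulr0.
Qed.

Lemma zero_sum_eigenfun_gunionr (S T : graph) l (z : gV T -> R) :
  zero_sum_eigenfun l z ->
  zero_sum_eigenfun (G := gunion S T) l (sum_fun (fun _ => 0) z).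
Proof.
case=> [[v zv] z_sum Qz]; split=> [|| [a|b]].
- by exists (inr v).
- by rewrite big_sumType /= big1_eq add0r.
- by rewrite Qmul_gunionl Qmul_const mulr0 addr0 mulr0.
- by rewrite Qmul_gunionr.
Qed.

Lemma copies_K4_zero_sum_eigenfun k :
  exists z, zero_sum_eigenfun (G := copies k.+1 (Kc 4)) 2 z.
Proof.
pose z (a : 'I_4) : R := (a == 0 :> nat)%:R - (a == 1 :> nat)%:R.
exists (sum_fun z (fun _ => 0)); apply: zero_sum_eigenfun_gunionl; split.
- by exists ord0; rewrite /z /= subr0 oner_eq0.
- by rewrite /z !big_ord_recr big_ord0 /=; ring.
- move=> a; rewrite /Qmul /z !big_ord_recr big_ord0 /=.
  by case: a => [[|[|[|[|?]]]] ?] //=; ring.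
Qed.

Lemma cone_eigenvalue (H : graph) l (z : gV H -> R) :
  symmetric (@gE H) -> zero_sum_eigenfun l z ->
  eigenvalue (sQ R (gjoin (Kc 1) H)) (l + 1).
Proof.
move=> symH [[v zv] z_sum Qz].
apply: (@sQ_eigenvalue (gjoin (Kc 1) H) (sum_fun (fun _ => 0) z) _ (inr v))
  => // [|[a|h]].
- exact: gjoin_sym (@Kc_sym 1) symH.
- by rewrite Qmul_gjoinl Qmul_K1 add0r /= mulr0; under eq_bigr do rewrite add0r.
- by rewrite Qmul_gjoinr big_ord1 /= Qz; ring.
Qed.

Definition starplus_fun (g a b : R) (j : nat) : R :=
  if j == 0%N then g else if (j < 3)%N then a else b.

Lemma Qmul_starplus s g a b (i : 'I_s.+3) :
  Qmul (G := starplus s.+2) (fun j => starplus_fun g a b j) i =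
    if i == 0 :> nat then (g + a) *+ 2 + (g + b) *+ s
    else if (i < 3)%N then (a + g) + (a + a) else b + g.
Proof.
rewrite /Qmul /=; under eq_bigr => j _ do rewrite -val_eqE /=.
rewrite -(big_mkord xpredT (fun j => (((i : nat) != j) && (((i : nat) == 0%N) || (j == 0%N))
   || ((i : nat) == 1%N) && (j == 2%N) || ((i : nat) == 2%N) && (j == 1%N))%:R
   * (starplus_fun g a b i + starplus_fun g a b j))).
rewrite big_ltn // big_ltn // big_ltn //; case: i => [[|[|[|i]]] lt_i] /=.
- rewrite (@big_nat_const_in _ _ _ _ (g + b)) => [|[|[|[|j]]] //= _]; last by rewrite mul1r.
  by rewrite /starplus_fun /= !subSS subn0; ring.
- rewrite (@big_nat_const_in _ _ _ _ 0) => [|[|[|[|j]]] //= _]; last by rewrite mul0r.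
  by rewrite /starplus_fun /= mul0rn; ring.
- rewrite (@big_nat_const_in _ _ _ _ 0) => [|[|[|[|j]]] //= _]; last by rewrite mul0r.
  by rewrite /starplus_fun /= mul0rn; ring.
- rewrite (@big_nat_const_in _ _ _ _ 0) => [|[|[|[|j]]] //= _]; last by rewrite andbF mul0r.
  by rewrite /starplus_fun /= mul0rn; ring.
Qed.

Lemma sum_starplus_fun s g a b :
  \sum_(i : gV (starplus s.+2)) (1 + starplus_fun g a b i) =
    (1 + g) + (1 + a) *+ 2 + (1 + b) *+ s.
Proof.
rewrite /= -(big_mkord xpredT (fun j => 1 + starplus_fun g a b j)).
rewrite big_ltn // big_ltn // big_ltn // (@big_nat_const_in _ _ _ _ (1 + b)).
  by rewrite /starplus_fun /= !subSS subn0 !addrA.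
by move=> [|[|[|j]]].
Qed.

Definition K11plus_fun (Y Z : R) (j : nat) : R :=
  if (j < 2)%N then 1 else if (j < 4)%N then Y else Z.

Lemma Qmul_K11plus n Y Z (i : 'I_n.+4) :
  Qmul (G := K11plus n.+4) (fun j => K11plus_fun Y Z j) i =
    if (i < 2)%N then 2 + (1 + Y) *+ 2 + (1 + Z) *+ n
    else if (i < 4)%N then (Y + 1) *+ 2 + (Y + Y) else (Z + 1) *+ 2.
Proof.
rewrite /Qmul /=; under eq_bigr => j _ do rewrite -val_eqE /=.
rewrite -(big_mkord xpredT (fun j => (((i : nat) != j) && [|| ((i : nat) < 2)%N, (j < 2)%N,
         ((i : nat) == 2%N) && (j == 3%N) | ((i : nat) == 3%N) && (j == 2%N)])%:R
   * (K11plus_fun Y Z i + K11plus_fun Y Z j))).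
rewrite big_ltn // big_ltn // big_ltn // big_ltn //.
case: i => [[|[|[|[|i]]]] lt_i] /=.
- rewrite (@big_nat_const_in _ _ _ _ (1 + Z)) => [|[|[|[|[|j]]]] //= _]; last by rewrite mul1r.
  by rewrite /K11plus_fun /= !subSS subn0; ring.
- rewrite (@big_nat_const_in _ _ _ _ (1 + Z)) => [|[|[|[|[|j]]]] //= _]; last by rewrite mul1r.
  by rewrite /K11plus_fun /= !subSS subn0; ring.
- rewrite (@big_nat_const_in _ _ _ _ 0) => [|[|[|[|[|j]]]] //= _]; last by rewrite mul0r.
  by rewrite /K11plus_fun /= mul0rn; ring.
- rewrite (@big_nat_const_in _ _ _ _ 0) => [|[|[|[|[|j]]]] //= _]; last by rewrite mul0r.
  by rewrite /K11plus_fun /= mul0rn; ring.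
- rewrite (@big_nat_const_in _ _ _ _ 0) => [|[|[|[|[|j]]]] //= _]; last by rewrite !andbF mul0r.
  by rewrite /K11plus_fun /= mul0rn; ring.
Qed.

Definition q_threshold (n : nat) : R := n%:R + 43/25.

(* Vertex 0 row of [Q x = l x] for [x] equal to [1] on [{0,1}], to
   [Y = 2/(l-4)] on [{2,3}] and to [Z = 2/(l-2)] elsewhere, cleared of
   denominators. *)
Definition K11plus_cubic (N l : R) : R :=
  (l - N) * (l - 4) * (l - 2) - 4 * (l - 2) - 2 * (N - 4) * (l - 4).

Lemma K11plus_cubic_root (N : R) :
  7 <= N -> exists2 l, N + 43/25 < l & K11plus_cubic N l = 0.
Proof.
move=> N_ge7.
have lt0 : K11plus_cubic N (N + 43/25) < 0.
  by rewrite /K11plus_cubic; have := sqr_ge0 (N - 1299/175); nra.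
have gt0 : 0 < K11plus_cubic N (N + 3) by rewrite /K11plus_cubic; nra.
pose p : {poly R} := ('X - N%:P) * ('X - 4%:P) * ('X - 2%:P) - 4%:P * ('X - 2%:P)
   - (2 * (N - 4))%:P * ('X - 4%:P).
have pE x : p.[x] = K11plus_cubic N x by rewrite /p !hornerE.
have [||l /andP [l_ge _] /rootP pl] := @poly_ivt _ p (N + 43/25) (N + 3).
- lra.
- by rewrite !pE; apply/andP; split; apply: ltW.
exists l; last by rewrite -pE.
by rewrite lt_neqAle l_ge andbT; apply: contraTneq lt0 => ->; rewrite -pE pl ltxx.
Qed.

Lemma K11plus_eigenvalue_gt n :
  (7 <= n)%N -> exists2 l, q_threshold n < l & eigenvalue (sQ R (K11plus n)) l.
Proof.
case: n => [|[|[|[|n]]]] // n_ge7.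
have N_ge7 : 7 <= n.+4%:R :> R by rewrite ler_nat.
have [l l_gt root_l] := K11plus_cubic_root N_ge7.
exists l => //.
have l4 : l - 4 != 0 by apply/eqP; lra.
have l2 : l - 2 != 0 by apply/eqP; lra.
pose Y := 2 / (l - 4); pose Z := 2 / (l - 2).
apply: (@sQ_eigenvalue (K11plus n.+4) (fun j => K11plus_fun Y Z j) _ ord0).
- exact: K11plus_sym.
- by rewrite /K11plus_fun /= oner_eq0.
move=> i; rewrite Qmul_K11plus /K11plus_fun.
case: ifP => _; [|case: ifP => _]; rewrite ?/Y ?/Z; last 2 first.
- by field.
- by field.
have : (2 + (1 + Y) *+ 2 + (1 + Z) *+ n - l) * ((l - 4) * (l - 2)) = 0.
  rewrite -oppr0 -root_l /K11plus_cubic -mulr_natr -addn4 natrD /Y /Z.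
  by field; apply/andP.
move/eqP; rewrite mulf_eq0 (negPf (mulf_neq0 l4 l2)) orbF subr_eq0 => /eqP ->.
by rewrite mulr1.
Qed.

End SignlessLaplacian.

Section Families.
Variable R : realType.

Lemma cone_test_copies_K4 k (c t : R) :
  0 < t -> 1 + 7 * t <= c * t -> cone_test (H := copies k (Kc 4)) c (fun _ => t).
Proof.
move=> t_gt0 t_test; apply: (cone_test_regular (d := 3)) => // [v|]; last lra.
by rewrite (deg_copies (d := 3)) // => a; rewrite deg_Kc.
Qed.

Lemma cone_copies_K4_eigenvalue_le k (c t b : R) :
  0 < t -> 1 + 7 * t <= c * t -> (1 + t) *+ (4 * k) <= c ->
  eigenvalue (sQ R (gjoin (Kc 1) (copies k (Kc 4)))) b -> b <= c.
Proof.
move=> t_gt0 t_test apex_le.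
apply: (@cone_eigenvalue_le _ _ (fun _ => t) _ _ (@copies_K4_sym k)).
- exact: cone_test_copies_K4.
- by rewrite sumr_const card_copies card_ord mulnC.
Qed.

Lemma cone_gunion_copies_K4_eigenvalue_le (S : graph) (f : gV S -> R) k (c t b : R) :
  symmetric (@gE S) -> cone_test c f -> 0 < t -> 1 + 7 * t <= c * t ->
  \sum_v (1 + f v) + (1 + t) *+ (4 * k) <= c ->
  eigenvalue (sQ R (gjoin (Kc 1) (gunion S (copies k (Kc 4))))) b -> b <= c.
Proof.
move=> symS f_test t_gt0 t_test apex_le.
apply: (@cone_eigenvalue_le _ (gunion S (copies k (Kc 4))) (sum_fun f (fun _ => t))).
- exact: gunion_sym symS (@copies_K4_sym k).
- exact (cone_test_gunion f_test (cone_test_copies_K4 k t_gt0 t_test)).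
- by rewrite (big_sumType _ xpredT) /= sumr_const card_copies card_ord mulnC.
Qed.

Lemma family1_eigenvalue_le n (b : R) : (7 <= n)%N -> (n %% 4 = 1)%N ->
  eigenvalue (sQ R (gjoin (Kc 1) (copies ((n - 1) %/ 4)%N (Kc 4)))) b ->
  b <= q_threshold R n.
Proof.
move=> n_ge7 n_mod; set k := ((n - 1) %/ 4)%N; set c := q_threshold R n.
have cE : c = n%:R + 43/25 by [].
have kE : (4 * k)%:R = n%:R - 1 :> R.
  by rewrite [n in RHS](_ : n = 4 * k + 1)%N ?natrD; [ring | rewrite /k; lia].
have N_ge9 : 9 <= n%:R :> R by rewrite ler_nat; lia.
have [t t_gt0 ht] : exists2 t : R, 0 < t & (c - 7) * t = 1.
  by apply: linear_eq_pos_sol; lra.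
apply: (cone_copies_K4_eigenvalue_le t_gt0); first lra.
by rewrite -mulr_natr kE; have := family1_apex_le N_ge9 ht; lra.
Qed.

Lemma family2_eigenvalue_le n (b : R) : (7 <= n)%N -> (n %% 4 = 2)%N ->
  eigenvalue (sQ R (gjoin (Kc 1) (gunion (Kc 1) (copies ((n - 2) %/ 4)%N (Kc 4))))) b ->
  b <= q_threshold R n.
Proof.
move=> n_ge7 n_mod; set k := ((n - 2) %/ 4)%N; set c := q_threshold R n.
have cE : c = n%:R + 43/25 by [].
have kE : (4 * k)%:R = n%:R - 2 :> R.
  by rewrite [n in RHS](_ : n = 4 * k + 2)%N ?natrD; [ring | rewrite /k; lia].
have N_ge10 : 10 <= n%:R :> R by rewrite ler_nat; lia.
have [t t_gt0 ht] : exists2 t : R, 0 < t & (c - 7) * t = 1.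
  by apply: linear_eq_pos_sol; lra.
have [p p_gt0 hp] : exists2 p : R, 0 < p & (c - 1) * p = 1.
  by apply: linear_eq_pos_sol; lra.
apply: (cone_gunion_copies_K4_eigenvalue_le (f := fun _ => p) (@Kc_sym 1) _ t_gt0).
- by apply: (cone_test_regular (d := 0)) => // [a|]; [rewrite deg_Kc | lra].
- lra.
- rewrite sumr_const card_ord -[(1 + t) *+ _]mulr_natr kE.
  by have := family2_apex_le N_ge10 ht hp; lra.
Qed.

Lemma family3_eigenvalue_le n (b : R) : (7 <= n)%N -> (n %% 4 = 3)%N ->
  eigenvalue (sQ R (gjoin (Kc 1) (gunion (star 1) (copies ((n - 3) %/ 4)%N (Kc 4))))) b ->
  b <= q_threshold R n.
Proof.
move=> n_ge7 n_mod; set k := ((n - 3) %/ 4)%N; set c := q_threshold R n.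
have cE : c = n%:R + 43/25 by [].
have kE : (4 * k)%:R = n%:R - 3 :> R.
  by rewrite [n in RHS](_ : n = 4 * k + 3)%N ?natrD; [ring | rewrite /k; lia].
have N_ge7 : 7 <= n%:R :> R by rewrite ler_nat.
have [t t_gt0 ht] : exists2 t : R, 0 < t & (c - 7) * t = 1.
  by apply: linear_eq_pos_sol; lra.
have [p p_gt0 hp] : exists2 p : R, 0 < p & (c - 3) * p = 1.
  by apply: linear_eq_pos_sol; lra.
apply: (cone_gunion_copies_K4_eigenvalue_le (f := fun _ => p) (@star_sym 1) _ t_gt0).
- by apply: (cone_test_regular (d := 1)) => // [a|]; [exact: deg_star1 | lra].
- lra.
- rewrite sumr_const card_ord -[(1 + p) *+ _]mulr_natr -[(1 + t) *+ _]mulr_natr kE.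
  by have := family3_apex_le N_ge7 ht hp; lra.
Qed.

Lemma family4_eigenvalue_le n s (b : R) :
  (2 <= s)%N -> (s <= n - 6)%N -> ((n - s - 2) %% 4 = 0)%N ->
  eigenvalue (sQ R (gjoin (Kc 1)
    (gunion (starplus s) (copies ((n - s - 2) %/ 4)%N (Kc 4))))) b ->
  b <= q_threshold R n.
Proof.
case: s => [|[|s]] // _ s_le n_mod; set k := ((n - s.+2 - 2) %/ 4)%N.
set c := q_threshold R n; set S : R := s.+2%:R.
have cE : c = n%:R + 43/25 by [].
have kE : (4 * k)%:R = n%:R - S - 2 :> R.
  by rewrite [n in RHS](_ : n = 4 * k + s.+2 + 2)%N ?natrD /S; [ring | rewrite /k; lia].
have sE : s%:R = S - 2 :> R by rewrite /S -addn2 natrD addrK.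
have S_ge2 : 2 <= S by rewrite /S ler_nat.
have S_le : S <= n%:R - 6 by rewrite /S lerBrDr -natrD ler_nat; lia.
have [t t_gt0 ht] : exists2 t : R, 0 < t & (c - 7) * t = 1.
  by apply: linear_eq_pos_sol; lra.
have [a a_gt0 ha] : exists2 a : R, 0 < a & (c - 4) * a = 3/2.
  by apply: linear_eq_pos_sol; lra.
have [b' b'_gt0 hb'] : exists2 b' : R, 0 < b' & (c - 2) * b' = 3/2.
  by apply: linear_eq_pos_sol; lra.
apply: (@cone_gunion_copies_K4_eigenvalue_le (starplus s.+2)
  (fun j => starplus_fun (1/2) a b' j) _ _ _ _ (@starplus_sym s.+2) _ t_gt0).
- split=> j; rewrite /starplus_fun.
    by case: ifP => _; [lra | case: ifP => _].
  rewrite Qmul_starplus; case: ifP => _; [|case: ifP => _; lra].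
  rewrite -[(_ + a) *+ _]mulr_natr -[(_ + b') *+ _]mulr_natr sE.
  by have := family4_centre_le S_ge2 S_le ha hb'; lra.
- lra.
- rewrite sum_starplus_fun -[(1 + a) *+ _]mulr_natr -[(1 + b') *+ _]mulr_natr.
  rewrite -[(1 + t) *+ _]mulr_natr kE sE.
  by have := family4_apex_le S_ge2 S_le ht ha hb'; lra.
Qed.

Lemma lem_family_eigenvalue_le n G (b : R) :
  (7 <= n)%N -> lem_family n G -> eigenvalue (sQ R G) b -> b <= q_threshold R n.
Proof.
move=> n_ge7; case=> [n_mod|n_mod|n_mod|s s_ge2 s_le n_mod].
- exact: family1_eigenvalue_le.
- exact: family2_eigenvalue_le.
- exact: family3_eigenvalue_le.
- exact: family4_eigenvalue_le.
Qed.

Lemma cone_copies_K4_eigenvalue3 k :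
  (0 < k)%N -> eigenvalue (sQ R (gjoin (Kc 1) (copies k (Kc 4)))) 3.
Proof.
case: k => // k _; have [z z_eig] := copies_K4_zero_sum_eigenfun R k.
rewrite (_ : 3 = 2 + 1 :> R); last ring.
exact: cone_eigenvalue (@copies_K4_sym k.+1) z_eig.
Qed.

Lemma cone_gunion_copies_K4_eigenvalue3 (S : graph) k :
  symmetric (@gE S) -> (0 < k)%N ->
  eigenvalue (sQ R (gjoin (Kc 1) (gunion S (copies k (Kc 4))))) 3.
Proof.
move=> symS; case: k => // k _; have [z z_eig] := copies_K4_zero_sum_eigenfun R k.
rewrite (_ : 3 = 2 + 1 :> R); last ring.
apply: cone_eigenvalue (zero_sum_eigenfun_gunionr S z_eig).
exact: gunion_sym symS (@copies_K4_sym k.+1).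
Qed.

Lemma lem_family_eigenvalue3 n G :
  (7 <= n)%N -> lem_family n G -> eigenvalue (sQ R G) 3.
Proof.
move=> n_ge7; case=> [n_mod|n_mod|n_mod|s s_ge2 s_le n_mod].
- by apply: cone_copies_K4_eigenvalue3; lia.
- by apply: cone_gunion_copies_K4_eigenvalue3; [exact: Kc_sym | lia].
- by apply: cone_gunion_copies_K4_eigenvalue3; [exact: star_sym | lia].
- by apply: cone_gunion_copies_K4_eigenvalue3; [exact: starplus_sym | lia].
Qed.

End Families.

Theorem lemma2p10 (R : realType) (n : nat) (G : graph) :
  (7 <= n)%N -> lem_family n G ->
  (exists a : R, is_q G a) /\ (exists b : R, is_q (K11plus n) b) /\
  (forall a b : R, is_q G a -> is_q (K11plus n) b -> a < b).
Proof.
move=> n_ge7 famG.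
have [l l_gt K_l] := K11plus_eigenvalue_gt R n_ge7.
have [a G_a a_max] := eigenvalue_max (lem_family_eigenvalue3 R n_ge7 famG).
have [b K_b b_max] := eigenvalue_max K_l.
split; [by exists a | split; [by exists b | move=> a' b' [G_a' _] [_ b'_max]]].
apply: le_lt_trans (lem_family_eigenvalue_le n_ge7 famG G_a') _.
exact: lt_le_trans l_gt (b'_max _ K_l).
Qed.
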